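(* Let $(V,\omega)$ be a $2n$-dimensional real symplectic vector space with compatible complex structure $J$, and let $\lambda\in\mathbb R$. In the algebra $\mathcal W^{\mathrm{pol}}_\lambda\otimes\mathrm{End}(\Lambda)$, the element $A_\lambda$ satisfies \[ A_\lambda^2=Q_\lambda\otimes 1+1\otimes\lambda N, \] where $Q_\lambda$ is the polynomial $Q_\lambda(z)=\|z\|^2$ on $V^*$ and $N\in\mathrm{End}(\Lambda)$ acts on $\Lambda^kV^{1,0}$ as multiplication by $2k-n$.
   Context: $g(v,w)=\omega(v,Jw)$ is the induced inner product, used to identify $V\cong V^*$. $V^{1,0}$ is $V$ as a complex vector space ($i$ acts as $J$) with Hermitian form $h=g-i\omega$. $\Lambda=\Lambda^\bullet V^{1,0}$; for $z\in V^{1,0}$, $\varepsilon_z$ is exterior multiplication by $z$ and $\iota_z$ its adjoint (contraction), and $c(z)=\varepsilon_z+\iota_z$. $\mathcal W^{\mathrm{pol}}_\lambda$ is the algebra of complex polynomial functions on $V^*$ with the Moyal product $\#_\lambda$; viewing $v\in V$ as a linear function on $V^*$, it is generated by $V$ subject to $v\#_\lambda w=vw+\frac{i\lambda}{2}\omega(v,w)$ (equivalently, it is the complexified tensor algebra of $V$ modulo $v\otimes w-w\otimes v-i\lambda\omega(v,w)$, polynomials being identified with symmetric tensors). $A_\lambda\in \mathcal W^{\mathrm{pol}}_\lambda\otimes\mathrm{End}(\Lambda)$ is the linear function $A_\lambda(z)=c(z)$ on $V^*\cong V$; i.e. $A_\lambda=\sum_{j=1}^{2n}e_j\otimes c(e_j)$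 for a $g$-orthonormal real basis $e_1,\dots,e_{2n}$ of $V$. *)

From HB Require Import structures.
From mathcomp Require Import all_boot all_order all_algebra.
From mathcomp Require Import mpoly complex.
Set Implicit Arguments. Unset Strict Implicit. Unset Printing Implicit Defensive.
Import Order.TTheory GRing.Theory Num.Theory.
Local Open Scope ring_scope.
Local Open Scope complex_scope.

Section Defs.
Variable R : rcfType.
Local Notation C := (complex R).
Variable n : nat.
Local Notation m := (n.*2).

(* V = R^(2n) as column vectors; Om = Gram matrix of omega in the standard
   basis, J = matrix of the complex structure. *)
Definition omega (Om : 'M[R]_m) (v w : 'cV[R]_m) : R :=
  \sum_(a < m) \sum_(b < m) v a 0 * Om a b * w b 0.

Definition gform (Om J : 'M[R]_m) (v w : 'cV[R]_m) : R := omega Om v (J *m w).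

(* Hermitian form h = g - i omega on V^{1,0} (C-linear in the first slot) *)
Definition hform (Om J : 'M[R]_m) (v w : 'cV[R]_m) : C :=
  ((gform Om J v w)%:C - 'i * (omega Om v w)%:C)%C.

Definition compatible_symplectic (Om J : 'M[R]_m) : Prop :=
  [/\ Om^T = - Om, Om \in unitmx, J *m J = - 1%:M,
      (forall v w, omega Om (J *m v) (J *m w) = omega Om v w) &
      (forall v, v != 0 -> 0 < gform Om J v v)].

(* V^{1,0} ----------------
   Modelled on an h-orthonormal complex basis u_1..u_n of V^{1,0}: Lambda has
   the basis e_S = u_{s1} /\ ... /\ u_{sk} (S = {s1 < ... < sk}), which is
   orthonormal for the Hermitian product induced by h.  An endomorphism is
   represented by its matrix X S T = coefficient of e_S in X e_T. *)
Definition endL := {set 'I_n} -> {set 'I_n} -> C.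

Definition wsign (i : 'I_n) (S : {set 'I_n}) : C :=
  (-1) ^+ #|[set j in S | (j < i)%N]|.

Definition ext_u (i : 'I_n) : endL := fun S T =>
  if (i \notin T) && (S == i |: T) then wsign i T else 0.

Definition int_u (i : 'I_n) : endL := fun S T =>
  if (i \in T) && (S == T :\ i) then wsign i S else 0.

(* For z in V^{1,0}, z = sum_i h(z,u_i) u_i; eps_z is C-linear in z,
   iota_z (its adjoint) is C-antilinear in z; c(z) = eps_z + iota_z. *)
Definition cliff (Om J : 'M[R]_m) (u : 'I_n -> 'cV[R]_m) (z : 'cV[R]_m) : endL :=
  fun S T => \sum_(i < n) (hform Om J z (u i) * ext_u i S T
                           + conjc (hform Om J z (u i)) * int_u i S T).

Definition Nop : endL := fun S T =>
  if S == T then (#|S|.*2)%:R - n%:R else 0.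

(* ---------- The Weyl algebra W^pol_lambda ------------------------------
   Polynomial functions on V^*, in coordinates x_a(xi) = xi(eps_a) where eps_a
   is the standard basis of V = R^(2n); a vector v in V is the linear function
   sum_a v_a x_a. *)
Definition Wpol := {mpoly C[m]}.

Definition linp (v : 'cV[R]_m) : Wpol := \sum_(a < m) (v a 0)%:C *: 'X_a.

Fixpoint bidiff (Om : 'M[R]_m) (k : nat) (f g : Wpol) : Wpol :=
  match k with
  | 0 => f * g
  | k'.+1 => \sum_(a < m) \sum_(b < m)
               (Om a b)%:C *: bidiff Om k' (mderiv a f) (mderiv b g)
  end.

(* Moyal product: f # g = sum_k (i lambda/2)^k / k! B_k(f,g); the sum is finite
   since B_k(f,g) = 0 once k > deg f.  It satisfies
   v # w = v w + (i lambda/2) omega(v,w) for v, w in V. *)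
Definition moyal (Om : 'M[R]_m) (lam : R) (f g : Wpol) : Wpol :=
  \sum_(k < msize f)
     (((('i * lam%:C / 2%:R) ^+ k) / (k`!)%:R)%C *: bidiff Om k f g).

(* ---------- W^pol_lambda (x) End(Lambda) ----------------------------------
   Identified with End(Lambda)-matrices with entries in W^pol_lambda:
   (P (x) X)(P' (x) X') = (P # P') (x) X X'. *)
Definition WL := {set 'I_n} -> {set 'I_n} -> Wpol.

Definition WLmul (Om : 'M[R]_m) (lam : R) (A B : WL) : WL := fun S T =>
  \sum_(U : {set 'I_n}) moyal Om lam (A S U) (B U T).

Definition tens (P : Wpol) (X : endL) : WL := fun S T => X S T *: P.

Definition WLadd (A B : WL) : WL := fun S T => A S T + B S T.

Definition idL : endL := fun S T => if S == T then 1 else 0.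

(* A_lambda = sum_j e_j (x) c(e_j) for a g-orthonormal real basis e *)
Definition Aop (Om J : 'M[R]_m) (u : 'I_n -> 'cV[R]_m)
    (e : 'I_m -> 'cV[R]_m) : WL :=
  fun S T => \sum_(j < m) tens (linp (e j)) (cliff Om J u (e j)) S T.

Definition Gmat (Om J : 'M[R]_m) : 'M[R]_m :=
  \matrix_(a, b) gform Om J (delta_mx a 0) (delta_mx b 0).

(* Q(xi) = ||xi||^2 for the dual inner product on V^*:  Q = sum G^{-1}_{ab} x_a x_b *)
Definition Qpol (Om J : 'M[R]_m) : Wpol :=
  \sum_(a < m) \sum_(b < m) ((invmx (Gmat Om J)) a b)%:C *: ('X_a * 'X_b).

End Defs.

(* In a unitary basis u_1, ..., u_n of V^{1,0} one has
   A = sum_i (w_i (x) eps_i + conj(w_i) (x) iota_i) with w_i = u_i + i J u_i.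
   On linear functions the Moyal product is v # w = v w + (i lam / 2) omega(v, w),
   so A^2 splits into a commutative and a symplectic part.  By the canonical
   anticommutation relations the commutative part is
   (1/2) sum_i (w_i conj(w_i) + conj(w_i) w_i) (x) 1, which is Q because
   (u_1, ..., u_n, J u_1, ..., J u_n) is a g-orthonormal real frame.  Since
   omega(w_i, conj(w_l)) = -2i delta_il and omega(w_i, w_l) = 0, the symplectic
   part is lam sum_i (eps_i iota_i - iota_i eps_i), and on Lambda^k this sum
   acts by k - (n - k) = 2k - n. *)

From HB Require Import structures.
From mathcomp Require Import all_boot all_order all_algebra.
From mathcomp Require Import mpoly complex ring.
Import Order.TTheory GRing.Theory Num.Theory.
Local Open Scope ring_scope.
Local Open Scope complex_scope.

Set Implicit Arguments. Unset Strict Implicit. Unset Printing Implicit Defensive.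

Section MoyalLinear.
Variables (R : rcfType) (n : nat).
Local Notation C := (complex R).
Local Notation m := n.*2.

Definition lin (c : 'I_m -> C) : Wpol R n := \sum_(a < m) c a *: 'X_a.

Definition bilin (M : 'M[R]_m) (c d : 'I_m -> C) : C :=
  \sum_(a < m) \sum_(b < m) (M a b)%:C * c a * d b.

Lemma mderiv_lin a c : mderiv a (lin c) = (c a)%:MP.
Proof.
rewrite /lin raddf_sum /= (bigD1 a) //= big1 => [|b nba].
  rewrite addr0 mderivZ mderivX mnm1E eqxx scale1r.
  have -> : (U_(a) - U_(a))%MM = 0%MM by apply/mnmP => i; rewrite mnmBE mnm0E subnn.
  by rewrite mpolyX0 -alg_mpolyC.
by rewrite mderivZ mderivX mnm1E (negbTE nba) scale0r scaler0.
Qed.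

Lemma msize_lin c : (msize (lin c) <= 2)%N.
Proof.
apply: leq_trans (msize_sum _ _ _) _; apply/bigmax_leqP => a _.
by apply: leq_trans (msizeZ_le _ _) _; rewrite msizeX mdeg1.
Qed.

Lemma lin_const_eq0 c : (msize (lin c) <= 1)%N -> forall a, c a = 0.
Proof.
move=> /msize1_polyC lin_cst a; apply/eqP; rewrite -(mpolyC_eq0 m).
by rewrite -mderiv_lin lin_cst mderivC.
Qed.

Lemma bidiff0l (Om : 'M[R]_m) k (g : Wpol R n) : bidiff Om k 0 g = 0.
Proof.
elim: k g => [|k IHk] g /=; first by rewrite mul0r.
by rewrite big1 // => a _; rewrite big1 // => b _; rewrite mderiv0 IHk scaler0.
Qed.

Lemma moyal_lin Om lam c d :
  moyal Om lam (lin c) (lin d) =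
  lin c * lin d + (('i%R * lam%:C / 2%:R) * bilin Om c d)%:MP.
Proof.
(* Unless [c = 0], [lin c] has total degree one and the Moyal series stops after k = 1. *)
have := msize_lin c; rewrite leq_eqVlt ltnS => /orP[/eqP size2|/lin_const_eq0 c0].
  rewrite /moyal size2 !big_ord_recl big_ord0 /= addr0.
  rewrite expr0 fact0 divr1 scale1r expr1 divr1; congr (_ + _).
  rewrite /bilin -alg_mpolyC -[in RHS]scalerA; congr (_ *: _).
  rewrite alg_mpolyC rmorph_sum; apply: eq_bigr => a _.
  rewrite rmorph_sum; apply: eq_bigr => b _.
  by rewrite !mderiv_lin -mpolyCM -mul_mpolyC -!mpolyCM mulrA.
have -> : lin c = 0 by rewrite /lin big1 // => a _; rewrite c0 scale0r.
rewrite /moyal big1 ?mul0r ?add0r => [|k _]; last by rewrite bidiff0l scaler0.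
rewrite /bilin big1 ?mulr0 ?mpolyC0 // => a _; rewrite big1 // => b _.
by rewrite c0 mulr0 mul0r.
Qed.

Lemma lin_mulE c d :
  lin c * lin d = \sum_a \sum_b (c a * d b) *: ('X_a * 'X_b : Wpol R n).
Proof.
rewrite /lin mulr_suml; apply: eq_bigr => a _; rewrite mulr_sumr.
by apply: eq_bigr => b _; rewrite -scalerAl -scalerAr scalerA.
Qed.

End MoyalLinear.

Section Clifford.
Variables (R : rcfType) (n : nat).
Local Notation C := (complex R).
Local Notation ext_u := (@ext_u R n).
Local Notation int_u := (@int_u R n).
Local Notation wsign := (@wsign R n).
Implicit Types (i l : 'I_n) (S T : {set 'I_n}) (X Y : endL R n).

Definition mulL X Y : endL R n := fun S T => \sum_(U : {set 'I_n}) X S U * Y U T.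

Lemma wsignU1 i l T : l \notin T ->
  wsign i (l |: T) = (if (l < i)%N then -1 else 1) * wsign i T.
Proof.
move=> lT; rewrite /wsign; case: ltnP => li.
  have -> : [set j in l |: T | (j < i)%N] = l |: [set j in T | (j < i)%N].
    by apply/setP => x; rewrite !inE; case: (eqVneq x l) => [->|].
  by rewrite cardsU1 inE (negbTE lT) /= add1n exprS.
have -> : [set j in l |: T | (j < i)%N] = [set j in T | (j < i)%N].
  apply/setP => x; rewrite !inE; case: (eqVneq x l) => [->|] //=.
  by rewrite ltnNge li (negbTE lT).
by rewrite mul1r.
Qed.

Lemma wsign_mulss i T : wsign i T * wsign i T = 1.
Proof. by rewrite /wsign -exprMn mulrNN mulr1 expr1n. Qed.

(* Of the two insertions, exactly one crosses the other index. *)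
Lemma wsignU1_swap i l T : i != l -> i \notin T -> l \notin T ->
  exists s : C, [/\ s * s = 1, wsign i (l |: T) = s * wsign i T
                          & wsign l (i |: T) = - s * wsign l T].
Proof.
move=> il iT lT; rewrite (wsignU1 i lT) (wsignU1 l iT).
case: (ltngtP i l) => [_|_|eq_il]; last by rewrite (val_inj eq_il) eqxx in il.
- by exists 1; rewrite mulr1 ?opprK.
- by exists (-1); rewrite mulrNN mulr1 ?opprK.
Qed.

Lemma mulL_ext_u X l S T :
  mulL X (ext_u l) S T = if l \notin T then X S (l |: T) * wsign l T else 0.
Proof.
rewrite /mulL /ext_u; case: ifP => lT /=.
  by rewrite (bigD1 (l |: T)) //= eqxx big1 ?addr0 // => U /negbTE ->; rewrite mulr0.
by rewrite big1 // => U _; rewrite mulr0.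
Qed.

Lemma mulL_int_u X l S T :
  mulL X (int_u l) S T = if l \in T then X S (T :\ l) * wsign l (T :\ l) else 0.
Proof.
rewrite /mulL /int_u; case: ifP => lT /=.
  by rewrite (bigD1 (T :\ l)) //= eqxx big1 ?addr0 // => U /negbTE ->; rewrite mulr0.
by rewrite big1 // => U _; rewrite mulr0.
Qed.

Lemma ext_u_anticomm i l S T :
  mulL (ext_u i) (ext_u l) S T + mulL (ext_u l) (ext_u i) S T = 0.
Proof.
rewrite !mulL_ext_u /ext_u; case: (eqVneq i l) => [<-|il].
  by rewrite !in_setU1 eqxx /= !mul0r !if_same addr0.
rewrite !in_setU1 (negbTE il) (eq_sym l i) (negbTE il) /=.
case: (boolP (l \in T)) => lT; case: (boolP (i \in T)) => iT /=;
  rewrite ?mul0r ?add0r ?addr0 //.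
rewrite [l |: (i |: T)]setUCA; case: eqP => _; last by rewrite !mul0r addr0.
by have [s [_ -> ->]] := wsignU1_swap il iT lT; ring.
Qed.

Lemma int_u_anticomm i l S T :
  mulL (int_u i) (int_u l) S T + mulL (int_u l) (int_u i) S T = 0.
Proof.
rewrite !mulL_int_u /int_u; case: (eqVneq i l) => [<-|il].
  by rewrite !in_setD1 eqxx /= !mul0r !if_same addr0.
rewrite !in_setD1 (negbTE il) (eq_sym l i) (negbTE il) /=.
case: (boolP (l \in T)) => lT; case: (boolP (i \in T)) => iT /=;
  rewrite ?mul0r ?add0r ?addr0 //.
set A := T :\ i :\ l.
have iA : i \notin A by rewrite !inE eqxx andbF.
have lA : l \notin A by rewrite !inE eqxx.
have -> : T :\ l = i |: A.
  have -> : A = T :\ l :\ i by apply/setP => x; rewrite !inE andbCA.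
  by rewrite setD1K // !inE il.
have -> : T :\ i = l |: A by rewrite setD1K // !inE eq_sym il.
rewrite setU1K //; case: eqP => [->|_]; last by rewrite !mul0r addr0.
by have [s [_ -> ->]] := wsignU1_swap il iA lA; ring.
Qed.

Lemma mulL_ext_int_diag i S T :
  mulL (ext_u i) (int_u i) S T = (S == T)%:R * (i \in S)%:R.
Proof.
rewrite mulL_int_u /ext_u !in_setD1 eqxx /=.
case: (boolP (i \in T)) => iT; rewrite ?(setD1K iT); case: eqP => [->|_];
  by rewrite /= ?wsign_mulss ?iT ?(negbTE iT) ?mul0r ?mulr0 ?mul1r.
Qed.

Lemma mulL_int_ext_diag i S T :
  mulL (int_u i) (ext_u i) S T = (S == T)%:R * (i \notin S)%:R.
Proof.
rewrite mulL_ext_u /int_u !in_setU1 eqxx /=.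
case: (boolP (i \in T)) => iT /=.
  by case: (eqVneq S T) => [->|_]; rewrite ?iT ?mulr0 ?mul0r.
rewrite (setU1K iT); case: eqP => [->|_];
  by rewrite /= ?wsign_mulss ?iT ?(negbTE iT) ?mul0r ?mulr0 ?mul1r.
Qed.

Lemma ext_int_anticomm i l S T :
  mulL (ext_u i) (int_u l) S T + mulL (int_u l) (ext_u i) S T
  = (i == l)%:R * (S == T)%:R.
Proof.
case: (eqVneq i l) => [<-|il].
  rewrite mulL_ext_int_diag mulL_int_ext_diag -mulrDr mul1r.
  by case: (i \in S); rewrite /= ?addr0 ?add0r mulr1.
rewrite mulL_int_u mulL_ext_u /ext_u /int_u mul0r.
rewrite in_setD1 in_setU1 (negbTE il) (eq_sym l i) (negbTE il) /=.
case: (boolP (l \in T)) => lT; case: (boolP (i \in T)) => iT /=;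
  rewrite ?mul0r ?add0r ?addr0 //.
set A := T :\ l.
have iA : i \notin A by rewrite !inE negb_and iT orbT.
have lA : l \notin A by rewrite !inE eqxx.
have -> : (i |: T) :\ l = i |: A.
  by apply/setP => x; rewrite !inE; case: (eqVneq x i) => [->|] //=; rewrite il.
case: eqP => [->|_]; last by rewrite !mul0r addr0.
rewrite -[in wsign i T](setD1K lT) -/A.
by have [s [ss -> ->]] := wsignU1_swap il iA lA; ring: ss.
Qed.

Lemma sum_int_ext_sub_ext_int S T :
  \sum_(i < n) (mulL (int_u i) (ext_u i) S T - mulL (ext_u i) (int_u i) S T)
  = - Nop R S T.
Proof.
rewrite /Nop; under eq_bigr => i _ do rewrite mulL_int_ext_diag mulL_ext_int_diag -mulrBr.
rewrite -mulr_sumr; case: (eqVneq S T) => [_|_]; last by rewrite mul0r oppr0.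
have card_in : \sum_(i < n) ((i \in S)%:R : C) = #|S|%:R.
  rewrite -sum1_card natr_sum [RHS]big_mkcond; apply: eq_bigr => i _; by case: (i \in S).
have card_notin : \sum_(i < n) ((i \notin S)%:R : C) = n%:R - #|S|%:R.
  rewrite -card_in -[n in n%:R]card_ord -sumr_const -sumrB.
  by apply: eq_bigr => i _; case: (i \in S); rewrite ?subrr ?subr0.
by rewrite mul1r sumrB card_in card_notin -addnn natrD; ring.
Qed.

End Clifford.

Lemma trmx_mulmxE (R : pzRingType) N k1 k2 (M : 'M[R]_N) (v : 'M[R]_(N, k1))
    (w : 'M[R]_(N, k2)) j l :
  (v^T *m M *m w) j l = \sum_a \sum_b v a j * M a b * w b l.
Proof.
rewrite [RHS]exchange_big mxE; apply: eq_bigr => b _.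
by rewrite mxE mulr_suml; apply: eq_bigr => a _; rewrite !mxE.
Qed.

(* Stated with [k = N] rather than for square matrices: the frame used below has
   width [n + n], which is not convertible to [n.*2]. *)
Lemma orthonormal_frame_outer (R : comUnitRingType) N k (G : 'M[R]_N)
    (X : 'M[R]_(N, k)) :
  k = N -> X^T *m G *m X = 1%:M -> X *m X^T *m G = 1%:M.
Proof. by move=> ekN; subst k => XGX1; rewrite -mulmxA; apply: mulmx1C. Qed.

Lemma orthonormal_frame_outer_inv (R : comUnitRingType) N k (G : 'M[R]_N)
    (X : 'M[R]_(N, k)) :
  k = N -> X^T *m G *m X = 1%:M -> X *m X^T = invmx G.
Proof.
move=> ekN /(orthonormal_frame_outer ekN) XXG1; have [_ uG] := mulmx1_unit XXG1.
by rewrite -[LHS]mulmx1 -(mulmxV uG) mulmxA XXG1 mul1mx.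
Qed.

Definition colmx (R : Type) N k (v : 'I_k -> 'cV[R]_N) : 'M[R]_(N, k) :=
  \matrix_(a, j) v j a 0.

Lemma col_colmx (R : Type) N k (v : 'I_k -> 'cV[R]_N) j : col j (colmx v) = v j.
Proof. by apply/colP => a; rewrite !mxE. Qed.

Section CompatibleStructure.
Variables (R : rcfType) (n : nat) (Om J : 'M[R]_n.*2).
Local Notation C := (complex R).
Local Notation m := n.*2.
Local Notation G := (Gmat Om J).
Implicit Types v w : 'cV[R]_m.

Lemma omegaE v w : omega Om v w = (v^T *m Om *m w) 0 0.
Proof. by rewrite trmx_mulmxE. Qed.

Lemma omegaNl v w : omega Om (- v) w = - omega Om v w.
Proof. by rewrite !omegaE linearN /= !mulNmx mxE. Qed.

Lemma omegaNr v w : omega Om v (- w) = - omega Om v w.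
Proof. by rewrite !omegaE mulmxN mxE. Qed.

Lemma Gmat_mulmx : G = Om *m J.
Proof.
apply/matrixP => a b; rewrite mxE /gform omegaE mulmxA -(mulmxA _ Om J) trmx_delta.
by rewrite -rowE -colE !mxE.
Qed.

Lemma gformE v w : gform Om J v w = (v^T *m G *m w) 0 0.
Proof. by rewrite /gform omegaE Gmat_mulmx !mulmxA. Qed.

Lemma gram_col k1 k2 (X : 'M[R]_(m, k1)) (Y : 'M[R]_(m, k2)) i l :
  (X^T *m G *m Y) i l = gform Om J (col i X) (col l Y).
Proof.
rewrite gformE !trmx_mulmxE; apply: eq_bigr => a _; apply: eq_bigr => b _.
by rewrite !mxE.
Qed.

Definition complexJ (s : C) v : 'I_m -> C := fun a => (v a 0)%:C + s * ((J *m v) a 0)%:C.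

Lemma bilin_complexJ s1 s2 v w :
  bilin Om (complexJ s1 v) (complexJ s2 w)
  = (omega Om v w)%:C + s2 * (omega Om v (J *m w))%:C
    + s1 * (omega Om (J *m v) w)%:C + s1 * s2 * (omega Om (J *m v) (J *m w))%:C.
Proof.
rewrite /bilin /complexJ /omega !rmorph_sum !mulr_sumr -!big_split /=.
apply: eq_bigr => a _.
rewrite !rmorph_sum !mulr_sumr -!big_split /=; apply: eq_bigr => b _.
by rewrite !rmorphM; ring.
Qed.

Hypothesis compOJ : compatible_symplectic Om J.

Lemma mulJJ v : J *m (J *m v) = - v.
Proof. by case: compOJ => _ _ JJ _ _; rewrite mulmxA JJ mulNmx mul1mx. Qed.

Lemma omegaJJ v w : omega Om (J *m v) (J *m w) = omega Om v w.
Proof. by case: compOJ. Qed.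

Section UnitaryBasis.
Variable u : 'I_n -> 'cV[R]_m.
Hypothesis u_unitary : forall i k, hform Om J (u i) (u k) = (i == k)%:R.

Lemma gform_omega_u i l :
  gform Om J (u i) (u l) = (i == l)%:R /\ omega Om (u i) (u l) = 0.
Proof.
move: (u_unitary i l); rewrite /hform -complexiE => /eqP; rewrite eq_complex /=.
case: (i == l) => /=; rewrite ?mulr0 ?mul0r ?mulr1 ?mul1r ?subr0 ?add0r ?addr0 ?oppr0;
  by case/andP => /eqP ->; rewrite oppr_eq0 => /eqP.
Qed.

Lemma gform_u_u i l : gform Om J (u i) (u l) = (i == l)%:R.
Proof. by case: (gform_omega_u i l). Qed.

Lemma omega_u_u i l : omega Om (u i) (u l) = 0.
Proof. by case: (gform_omega_u i l). Qed.

Lemma gform_u_Ju i l : gform Om J (u i) (J *m u l) = 0.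
Proof. by rewrite /gform mulJJ omegaNr omega_u_u oppr0. Qed.

Lemma gform_Ju_u i l : gform Om J (J *m u i) (u l) = 0.
Proof. by rewrite /gform omegaJJ omega_u_u. Qed.

Lemma gform_Ju_Ju i l : gform Om J (J *m u i) (J *m u l) = (i == l)%:R.
Proof. by rewrite /gform omegaJJ -gform_u_u. Qed.

Lemma omega_u_Ju i l : omega Om (u i) (J *m u l) = (i == l)%:R.
Proof. exact: gform_u_u. Qed.

Lemma omega_Ju_u i l : omega Om (J *m u i) (u l) = - (i == l)%:R.
Proof. by rewrite -omegaJJ mulJJ omegaNl -gform_u_u. Qed.

Lemma omega_Ju_Ju i l : omega Om (J *m u i) (J *m u l) = 0.
Proof. by rewrite omegaJJ omega_u_u. Qed.

(* (u_1, ..., u_n, J u_1, ..., J u_n) is a g-orthonormal real frame. *)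
Lemma outer_u_Ju a b :
  \sum_i (u i a 0 * u i b 0 + (J *m u i) a 0 * (J *m u i) b 0) = invmx G a b.
Proof.
pose P := row_mx (colmx u) (J *m colmx u).
have col_Ju i : col i (J *m colmx u) = J *m u i by rewrite colE -mulmxA -colE col_colmx.
have PGP : P^T *m G *m P = 1%:M.
  rewrite tr_row_mx mul_col_mx mul_col_row scalar_mx_block.
  congr block_mx; apply/matrixP => i l; rewrite gram_col ?col_colmx ?col_Ju !mxE.
  - exact: gform_u_u.
  - exact: gform_u_Ju.
  - exact: gform_Ju_u.
  - exact: gform_Ju_Ju.
rewrite -(orthonormal_frame_outer_inv (addnn n) PGP) tr_row_mx mul_row_col mxE.
rewrite !mxE big_split /=; congr (_ + _); apply: eq_bigr => i _; rewrite !mxE //.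
by congr (_ * _); apply: eq_bigr => j _; rewrite mxE.
Qed.

Lemma bilin_complexJ_u s1 s2 i l :
  bilin Om (complexJ s1 (u i)) (complexJ s2 (u l)) = (s2 - s1) * (i == l)%:R.
Proof.
rewrite bilin_complexJ omega_u_u omega_u_Ju omega_Ju_u omega_Ju_Ju rmorphN !rmorph0.
by rewrite rmorph_nat; ring.
Qed.

Lemma sum_complexJ_u_sym a b :
  \sum_i (complexJ 'i%R (u i) a * complexJ (- 'i%R) (u i) b
          + complexJ (- 'i%R) (u i) a * complexJ 'i%R (u i) b)
  = 2%:R * (invmx G a b)%:C.
Proof.
rewrite -outer_u_Ju rmorph_sum mulr_sumr; apply: eq_bigr => i _.
have ii : 'i%R * 'i%R = -1 :> C by rewrite -expr2 sqrCi.
by rewrite /complexJ rmorphD !rmorphM; ring: ii.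
Qed.

End UnitaryBasis.

Lemma sum_frame_coord (e : 'I_m -> 'cV[R]_m) (M : 'M[R]_m) v a :
  \sum_j ((e j)^T *m M *m v) 0 0 * e j a 0
  = (colmx e *m (colmx e)^T *m M *m v) a 0.
Proof.
rewrite -!mulmxA mxE; apply: eq_bigr => j _; rewrite mulrC [colmx e a j]mxE.
congr (_ * _); rewrite mulmxA !trmx_mulmxE.
by apply: eq_bigr => b _; apply: eq_bigr => c _; rewrite !mxE.
Qed.

Lemma conjc_hform v w :
  conjc (hform Om J v w) = (gform Om J v w)%:C + 'i%R * (omega Om v w)%:C.
Proof.
apply/eqP; rewrite /hform -complexiE eq_complex /=.
by rewrite !(mul0r, mul1r, mulr0, subr0, add0r, sub0r, addr0, opprK, oppr0) !eqxx.
Qed.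

Section OrthonormalBasis.
Variable e : 'I_m -> 'cV[R]_m.
Hypothesis e_orthonormal : forall j k, gform Om J (e j) (e k) = (j == k)%:R.

Lemma outer_e_Gmat : colmx e *m (colmx e)^T *m G = 1%:M.
Proof.
apply: orthonormal_frame_outer => //; apply/matrixP => j l.
by rewrite gram_col !col_colmx e_orthonormal mxE.
Qed.

Lemma sum_gform_e v a : \sum_j gform Om J (e j) v * e j a 0 = v a 0.
Proof.
under eq_bigr => j _ do rewrite gformE.
by rewrite sum_frame_coord outer_e_Gmat mul1mx.
Qed.

Lemma sum_omega_e v a : \sum_j omega Om (e j) v * e j a 0 = - (J *m v) a 0.
Proof.
under eq_bigr => j _ do rewrite omegaE.
have -> : Om = - (G *m J).
  by case: compOJ => _ _ JJ _ _; rewrite Gmat_mulmx -mulmxA JJ mulmxN mulmx1 opprK.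
by rewrite sum_frame_coord mulmxN !mulNmx !mulmxA outer_e_Gmat mul1mx mxE.
Qed.

Lemma sum_hform_e v a : \sum_j hform Om J (e j) v * (e j a 0)%:C = complexJ 'i%R v a.
Proof.
transitivity ((\sum_j gform Om J (e j) v * e j a 0)%:C
              - 'i%R * (\sum_j omega Om (e j) v * e j a 0)%:C).
  rewrite !rmorph_sum mulr_sumr -sumrB; apply: eq_bigr => j _.
  by rewrite /hform !rmorphM; ring.
by rewrite sum_gform_e sum_omega_e rmorphN mulrN opprK.
Qed.

Lemma sum_conjc_hform_e v a :
  \sum_j conjc (hform Om J (e j) v) * (e j a 0)%:C = complexJ (- 'i%R) v a.
Proof.
under eq_bigr => j _ do rewrite conjc_hform.
transitivity ((\sum_j gform Om J (e j) v * e j a 0)%:C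
              + 'i%R * (\sum_j omega Om (e j) v * e j a 0)%:C).
  rewrite !rmorph_sum mulr_sumr -big_split /=; apply: eq_bigr => j _.
  by rewrite !rmorphM; ring.
by rewrite sum_gform_e sum_omega_e rmorphN mulrN /complexJ mulNr.
Qed.

End OrthonormalBasis.
End CompatibleStructure.

Section IndexedSums.
Variables (R : rcfType) (n : nat) (K : finType).
Local Notation C := (complex R).
Local Notation m := n.*2.

Lemma sum_mulrn_eq (V : nmodType) (F : K -> V) j : \sum_k F k *+ (k == j) = F j.
Proof. by rewrite (bigD1 j) //= eqxx big1 ?addr0 // => k /negbTE ->. Qed.

Lemma lin_sum (x : K -> C) (v : K -> 'I_m -> C) :
  lin (fun a => \sum_k x k * v k a) = \sum_k x k *: lin (v k).
Proof.
rewrite /lin; under eq_bigr => a _ do rewrite scaler_suml.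
rewrite exchange_big; apply: eq_bigr => k _; rewrite scaler_sumr.
by apply: eq_bigr => a _; rewrite scalerA.
Qed.

Lemma sum_mulL_scale (F G : K -> endL R n) (p : K -> Wpol R n) S T :
  \sum_U (\sum_k F k S U *: p k) * (\sum_k G k U T *: p k)
  = \sum_k \sum_k' mulL (F k) (G k') S T *: (p k * p k').
Proof.
transitivity (\sum_U \sum_k \sum_k' (F k S U * G k' U T) *: (p k * p k')).
  apply: eq_bigr => U _; rewrite mulr_suml; apply: eq_bigr => k _.
  rewrite mulr_sumr; apply: eq_bigr => k' _.
  by rewrite -scalerAl -scalerAr scalerA.
rewrite exchange_big; apply: eq_bigr => k _; rewrite exchange_big.
by apply: eq_bigr => k' _; rewrite /mulL scaler_suml.
Qed.

Lemma bilin_sum Om (x y : K -> C) (v : K -> 'I_m -> C) :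
  bilin Om (fun a => \sum_k x k * v k a) (fun b => \sum_k y k * v k b)
  = \sum_k \sum_k' x k * y k' * bilin Om (v k) (v k').
Proof.
transitivity (\sum_a \sum_b \sum_k \sum_k'
                x k * y k' * ((Om a b)%:C * v k a * v k' b)).
  apply: eq_bigr => a _; apply: eq_bigr => b _.
  rewrite -mulrA mulr_suml mulr_sumr; apply: eq_bigr => k _.
  by rewrite !mulr_sumr; apply: eq_bigr => k' _; ring.
under eq_bigr => a _ do rewrite exchange_big.
rewrite exchange_big; apply: eq_bigr => k _.
under eq_bigr => a _ do rewrite exchange_big.
rewrite exchange_big; apply: eq_bigr => k' _.
by rewrite /bilin mulr_sumr; apply: eq_bigr => a _; rewrite mulr_sumr.
Qed.

Lemma sum_bilin_mulL Om (F : K -> endL R n) (v : K -> 'I_m -> C) S T :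
  \sum_U bilin Om (fun a => \sum_k F k S U * v k a) (fun b => \sum_k F k U T * v k b)
  = \sum_k \sum_k' mulL (F k) (F k') S T * bilin Om (v k) (v k').
Proof.
under eq_bigr => U _ do rewrite bilin_sum.
rewrite exchange_big; apply: eq_bigr => k _; rewrite exchange_big.
by apply: eq_bigr => k' _; rewrite /mulL mulr_suml.
Qed.

End IndexedSums.

Section LadderDecomposition.
Variables (R : rcfType) (n : nat) (Om J : 'M[R]_n.*2) (u : 'I_n -> 'cV[R]_n.*2).
Local Notation C := (complex R).
Local Notation K := (bool * 'I_n)%type.

(* [(true, i)] indexes the term [(u_i + i J u_i) (x) eps_i] of [A] and [(false, i)]
   the term [(u_i - i J u_i) (x) iota_i]. *)
Definition ladder (k : K) : endL R n := if k.1 then ext_u R k.2 else int_u R k.2.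
Definition ladder_sign (k : K) : C := if k.1 then 'i%R else - 'i%R.
Definition ladder_coef (k : K) : 'I_n.*2 -> C := complexJ J (ladder_sign k) (u k.2).
Definition ladder_dual (k : K) : K := (~~ k.1, k.2).

Lemma big_ladder (V : nmodType) (F : K -> V) :
  \sum_k F k = \sum_i (F (true, i) + F (false, i)).
Proof.
transitivity (\sum_(b : bool) \sum_i F (b, i)).
  by rewrite pair_big; apply: eq_bigr => -[].
by rewrite big_bool -big_split.
Qed.

Lemma ladder_anticomm k k' S T :
  mulL (ladder k) (ladder k') S T + mulL (ladder k') (ladder k) S T
  = (k' == ladder_dual k)%:R * (S == T)%:R.
Proof.
case: k => [[] i]; case: k' => [[] l]; rewrite /ladder /ladder_dual /=.
- by rewrite ext_u_anticomm mul0r.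
- by rewrite ext_int_anticomm eq_sym.
- by rewrite addrC ext_int_anticomm.
- by rewrite int_u_anticomm mul0r.
Qed.

Lemma sum_ladder_dual S T :
  \sum_k mulL (ladder k) (ladder (ladder_dual k)) S T * ladder_sign k
  = 'i%R * Nop R S T.
Proof.
rewrite big_ladder -[Nop R S T]opprK -sum_int_ext_sub_ext_int mulrN -mulNr mulr_sumr.
by apply: eq_bigr => i _; rewrite /ladder /ladder_sign /=; ring.
Qed.

Variable e : 'I_n.*2 -> 'cV[R]_n.*2.
Hypothesis compOJ : compatible_symplectic Om J.
Hypothesis u_unitary : forall i k, hform Om J (u i) (u k) = (i == k)%:R.
Hypothesis e_orthonormal : forall j k, gform Om J (e j) (e k) = (j == k)%:R.

Lemma Aop_ladder S U :
  Aop Om J u e S U = lin (fun a => \sum_k ladder k S U * ladder_coef k a).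
Proof.
rewrite /Aop /tens /linp /lin; under eq_bigr => j _ do rewrite scaler_sumr.
rewrite exchange_big; apply: eq_bigr => a _.
under eq_bigr => j _ do rewrite scalerA.
rewrite -scaler_suml big_ladder; congr (_ *: _).
rewrite /cliff; under eq_bigr => j _ do rewrite mulr_suml.
rewrite exchange_big; apply: eq_bigr => i _.
rewrite /ladder /ladder_coef /= -(sum_hform_e compOJ e_orthonormal).
rewrite -(sum_conjc_hform_e compOJ e_orthonormal) !mulr_sumr -big_split /=.
by apply: eq_bigr => j _; ring.
Qed.

Lemma bilin_ladder_coef k k' :
  bilin Om (ladder_coef k) (ladder_coef k')
  = (k' == ladder_dual k)%:R * (- 2%:R * ladder_sign k).
Proof.
case: k => [[] i]; case: k' => [[] l];
  rewrite /ladder_coef /ladder_dual /ladder_sign /= (bilin_complexJ_u compOJ u_unitary) /=;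
  rewrite ?subrr ?mul0r // eq_sym; ring.
Qed.

Lemma sum_ladder_coef_dual :
  \sum_k lin (ladder_coef k) * lin (ladder_coef (ladder_dual k)) = 2%:R *: Qpol Om J.
Proof.
rewrite big_ladder.
transitivity (\sum_i \sum_a \sum_b
   (complexJ J 'i%R (u i) a * complexJ J (- 'i%R) (u i) b
    + complexJ J (- 'i%R) (u i) a * complexJ J 'i%R (u i) b) *: ('X_a * 'X_b : Wpol R n)).
  apply: eq_bigr => i _; rewrite !lin_mulE -big_split; apply: eq_bigr => a _.
  by rewrite -big_split; apply: eq_bigr => b _; rewrite scalerDl.
rewrite exchange_big; under eq_bigr => a _ do rewrite exchange_big.
rewrite /Qpol scaler_sumr; apply: eq_bigr => a _.
rewrite scaler_sumr; apply: eq_bigr => b _.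
by rewrite -scaler_suml (sum_complexJ_u_sym compOJ u_unitary) scalerA.
Qed.

Lemma sum_mulL_lin_ladder S T :
  \sum_k \sum_k' mulL (ladder k) (ladder k') S T
                  *: (lin (ladder_coef k) * lin (ladder_coef k'))
  = (S == T)%:R *: Qpol Om J.
Proof.
(* The products [lin _ * lin _] commute, so twice the sum is a sum of anticommutators. *)
set P := LHS.
have P_sym : P = \sum_k \sum_k' mulL (ladder k') (ladder k) S T
                   *: (lin (ladder_coef k) * lin (ladder_coef k')).
  rewrite /P exchange_big; apply: eq_bigr => k _; apply: eq_bigr => k' _.
  by rewrite mulrC.
apply: (@scalerI _ _ (2%:R : C)); first by rewrite pnatr_eq0.
rewrite [in LHS]scaler_nat [in LHS]mulr2n {2}P_sym -big_split /=.
under eq_bigr => k _ do rewrite -big_split /=.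
under eq_bigr => k _ do under eq_bigr => k' _ do
  rewrite -scalerDl ladder_anticomm -scalerA scaler_nat.
under eq_bigr => k _ do rewrite sum_mulrn_eq.
by rewrite -scaler_sumr sum_ladder_coef_dual !scalerA mulrC.
Qed.

Lemma sum_bilin_ladder S T :
  \sum_k \sum_k' mulL (ladder k) (ladder k') S T * bilin Om (ladder_coef k) (ladder_coef k')
  = - 2%:R * 'i%R * Nop R S T.
Proof.
under eq_bigr => k _ do under eq_bigr => k' _ do rewrite bilin_ladder_coef mulrCA mulr_natl.
under eq_bigr => k _ do rewrite sum_mulrn_eq.
rewrite -mulrA -sum_ladder_dual mulr_sumr; apply: eq_bigr => k _; ring.
Qed.

End LadderDecomposition.

Unset Implicit Arguments. Set Strict Implicit.

Theorem lemma3p1 (R : rcfType) (n : nat) (Om J : 'M[R]_(n.*2)) (lam : R)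
    (u : 'I_n -> 'cV[R]_(n.*2)) (e : 'I_(n.*2) -> 'cV[R]_(n.*2)) :
  compatible_symplectic Om J ->
  (forall i k, hform Om J (u i) (u k) = (i == k)%:R) ->
  (forall j k, gform Om J (e j) (e k) = (j == k)%:R) ->
  let A := Aop Om J u e in
  forall S T,
    WLmul Om lam A A S T
    = WLadd (tens (Qpol Om J) (@idL R n))
            (tens 1 (fun S' T' => lam%:C * @Nop R n S' T')) S T.
Proof.
move=> compOJ u_unitary e_orthonormal A S T.
rewrite /WLmul /A; under eq_bigr => U _ do
  rewrite !(Aop_ladder u compOJ e_orthonormal) moyal_lin !lin_sum.
rewrite big_split /= sum_mulL_scale (sum_mulL_lin_ladder compOJ u_unitary).
rewrite -rmorph_sum -mulr_sumr sum_bilin_mulL (sum_bilin_ladder compOJ u_unitary).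
rewrite /WLadd /tens /idL; congr (_ + _); first by case: eqP.
rewrite alg_mpolyC; congr (_%:MP).
have ii : 'i%R * 'i%R = -1 :> complex R by rewrite -expr2 sqrCi.
have halfK : (2%:R : complex R) / 2%:R = 1 by rewrite divff // pnatr_eq0.
by ring: ii halfK.
Qed.
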